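(* Let $G=(V,E)$ be a claw-free graph and $I$ a maximum cardinality independent set of $G$. For any $a,b\in I$ with $a\ne b$ we have $N(\mathtt{T1}^a_b)\cap V_b=\mathtt{T1}^b_a$ and $N(\mathtt{T2}^a)\cap V_b\subseteq\mathtt{T2}^b$.
   Context: Graphs are finite, simple, undirected; claw-free means no induced $K_{1,3}$. For a set $X$ of vertices, $N(X)=\bigcup_{x\in X}N[x]\setminus X$. For $a\in I$, the $1$-pack $V_a$ is $\{v\in V\setminus I : N(v)\cap I=\{a\}\}$. Each $V_a$ is partitioned according to neighbourhoods in the union of all $1$-packs: $\mathtt{T0}^a$ consists of $v\in V_a$ with no neighbour in any $1$-pack other than $V_a$; for $b\in I\setminus\{a\}$, $\mathtt{T1}^a_b$ consists of $v\in V_a$ that have a neighbour in $V_b$ and no neighbour in any $1$-pack other than $V_a$ and $V_b$; $\mathtt{T2}^a$ consists of $v\in V_a$ having neighbours in at least two distinct $1$-packs other than $V_a$. *)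

From mathcomp Require Import all_boot.
Set Implicit Arguments. Unset Strict Implicit. Unset Printing Implicit Defensive.

Definition simple_graph (T : finType) (e : rel T) : Prop :=
  symmetric e /\ irreflexive e.

Definition nbh (T : finType) (e : rel T) (v : T) : {set T} := [set u | e v u].
Definition cnbh (T : finType) (e : rel T) (v : T) : {set T} := v |: nbh e v.

Definition nbhS (T : finType) (e : rel T) (X : {set T}) : {set T} :=
  (\bigcup_(x in X) cnbh e x) :\: X.

Definition claw_free (T : finType) (e : rel T) : Prop :=
  forall c x y z : T, e c x -> e c y -> e c z ->
    x != y -> y != z -> x != z ->
    ~~ e x y -> ~~ e y z -> ~~ e x z -> False.

Definition independent (T : finType) (e : rel T) (S : {set T}) : bool :=
  [forall x in S, forall y in S, ~~ e x y].

Definition max_independent (T : finType) (e : rel T) (I : {set T}) : Prop :=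
  independent e I /\ forall S : {set T}, independent e S -> #|S| <= #|I|.

(* the 1-pack V_a *)
Definition pack1 (T : finType) (e : rel T) (I : {set T}) (a : T) : {set T} :=
  [set v in ~: I | nbh e v :&: I == [set a]].

Definition adj_pack (T : finType) (e : rel T) (I : {set T}) (v c : T) : bool :=
  [exists u in pack1 e I c, e v u].

Definition T0 (T : finType) (e : rel T) (I : {set T}) (a : T) : {set T} :=
  [set v in pack1 e I a | [forall c in I, (c != a) ==> ~~ adj_pack e I v c]].

Definition T1 (T : finType) (e : rel T) (I : {set T}) (a b : T) : {set T} :=
  [set v in pack1 e I a | adj_pack e I v b &&
     [forall c in I, ((c != a) && (c != b)) ==> ~~ adj_pack e I v c]].

Definition T2 (T : finType) (e : rel T) (I : {set T}) (a : T) : {set T} :=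
  [set v in pack1 e I a | [exists c in I, exists d in I,
     [&& c != a, d != a, c != d, adj_pack e I v c & adj_pack e I v d]]].

From mathcomp Require Import all_boot.
Set Implicit Arguments. Unset Strict Implicit. Unset Printing Implicit Defensive.

(* Everything rests on one local claw argument: if u in V_a is adjacent to
   x in V_b and to w in V_c, with a, b, c distinct, then x and w are adjacent,
   for otherwise u, a, x, w would form a claw centred at u.  Hence an edge
   between V_a and V_b transports adjacency to every third 1-pack V_c, which
   gives both inclusions. *)

Section OnePacks.
Variables (T : finType) (e : rel T) (I : {set T}).

Lemma pack1_adjE v c : v \in pack1 e I c -> {in I, forall x, e v x = (x == c)}.
Proof.
rewrite inE => /andP [_ /eqP nbhI] x xI.
by move/setP/(_ x): nbhI; rewrite !inE xI andbT.
Qed.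

Lemma pack1_notin v c : v \in pack1 e I c -> v \notin I.
Proof. by rewrite !inE => /andP []. Qed.

Lemma pack1_in v c : v \in pack1 e I c -> c \in I.
Proof. by rewrite inE => /andP [_ /eqP /setP /(_ c)]; rewrite !inE eqxx => /andP []. Qed.

Lemma pack1_inj v c d : v \in pack1 e I c -> v \in pack1 e I d -> c = d.
Proof.
move=> vc vd; apply/eqP.
by rewrite -(pack1_adjE vd (pack1_in vc)) (pack1_adjE vc (pack1_in vc)).
Qed.

Lemma adj_packI u w c : w \in pack1 e I c -> e u w -> adj_pack e I u c.
Proof. by move=> wc euw; apply/existsP; exists w; rewrite wc. Qed.

Lemma nbhSP (X : {set T}) v :
  reflect (v \notin X /\ exists2 x, x \in X & e x v) (v \in nbhS e X).
Proof.
rewrite /nbhS in_setD; apply: (iffP andP) => [[vX /bigcupP [x xX]] | [vX [x xX exv]]].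
  rewrite /cnbh in_setU1 inE => /orP [/eqP vx | exv]; last by split=> //; exists x.
  by rewrite vx xX in vX.
by split=> //; apply/bigcupP; exists x; rewrite // /cnbh in_setU1 inE exv orbT.
Qed.

Hypotheses (e_sym : symmetric e) (e_claw_free : claw_free e).

Lemma pack1_claw u x w a b c :
  u \in pack1 e I a -> x \in pack1 e I b -> w \in pack1 e I c ->
  a != b -> a != c -> b != c -> e u x -> e u w -> e x w.
Proof.
move=> ua xb wc ab ac bc eux euw; apply/negPn/negP => nexw.
have aI := pack1_in ua.
have ax : a != x by apply: contraNneq (pack1_notin xb) => <-.
have aw : a != w by apply: contraNneq (pack1_notin wc) => <-.
have xw : x != w by apply: contraNneq bc => xw; rewrite xw in xb; rewrite (pack1_inj xb wc).
apply: (e_claw_free (c := u) (x := a) (y := x) (z := w)) => //.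
- by rewrite (pack1_adjE ua aI).
- by rewrite e_sym (pack1_adjE xb aI).
- by rewrite e_sym (pack1_adjE wc aI).
Qed.

Lemma adj_pack_transfer u v a b c :
  u \in pack1 e I a -> v \in pack1 e I b -> e u v ->
  a != b -> c != a -> c != b -> adj_pack e I u c -> adj_pack e I v c.
Proof.
move=> ua vb euv ab ca cb /existsP [w /andP [wc euw]].
apply: (adj_packI wc).
by apply: (pack1_claw ua vb wc) => //; rewrite eq_sym.
Qed.

Lemma T1_adj a b u v :
  a != b -> u \in T1 e I a b -> v \in pack1 e I b -> e u v -> v \in T1 e I b a.
Proof.
move=> ab; rewrite inE => /and3P [ua _ /forallP uT1] vb euv.
rewrite inE vb /=; apply/andP; split; first by apply: (adj_packI ua); rewrite e_sym.
apply/forallP => c; apply/implyP => cI; apply/implyP => /andP [cb ca].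
apply: contraTN (uT1 c); rewrite cI ca cb /= negbK => vc.
by apply: (adj_pack_transfer vb ua) => //; rewrite 1?e_sym 1?eq_sym.
Qed.

Lemma T2_adj a b u v :
  a != b -> u \in T2 e I a -> v \in pack1 e I b -> e u v -> v \in T2 e I b.
Proof.
move=> ab; rewrite inE => /andP [ua /existsP [c /andP [cI /existsP [d /andP [dI]]]]].
case/and5P => ca da cd uc ud vb euv.
have [x [xI xa xb ux]] :
    exists x, [/\ x \in I, x != a, x != b & adj_pack e I u x].
  have [cb | cb] := eqVneq c b; last by exists c.
  by exists d; split=> //; rewrite -cb eq_sym.
rewrite inE vb; apply/existsP; exists a; rewrite (pack1_in ua).
apply/existsP; exists x; rewrite xI ab xb eq_sym xa.
have va : adj_pack e I v a by apply: (adj_packI ua); rewrite e_sym.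
by rewrite va (adj_pack_transfer ua vb).
Qed.

End OnePacks.

Theorem lemma12 (T : finType) (e : rel T) (I : {set T}) (a b : T) :
  simple_graph e -> claw_free e -> max_independent e I ->
  a \in I -> b \in I -> a != b ->
  nbhS e (T1 e I a b) :&: pack1 e I b = T1 e I b a /\
  nbhS e (T2 e I a) :&: pack1 e I b \subset T2 e I b.
Proof.
move=> [e_sym _] cf _ _ _ ab.
split.
- apply/setP => v; rewrite inE; apply/andP/idP => [[/nbhSP [_ [u uT1 euv]] vb] | vT1].
    exact: T1_adj uT1 vb euv.
  have := vT1; rewrite inE => /and3P [vb /existsP [u /andP [ua evu]] _].
  split=> //; apply/nbhSP; split.
    by apply: contraNN ab => /setIdP [va _]; rewrite (pack1_inj vb va).
  exists u; last by rewrite e_sym.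
  by apply: (T1_adj e_sym cf _ vT1 ua); rewrite 1?eq_sym.
- apply/subsetP => v /setIP [/nbhSP [_ [u uT2 euv]] vb].
  exact: T2_adj uT2 vb euv.
Qed.
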